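(* Let $\mathbb{K}$ be a field of characteristic zero, let $s,t$ be commuting variables, and work in the noncommutative polynomial algebra $\mathbb{K}[s,t]\langle x,y\rangle$. For a variable $r\in\{s,t,s+t\}$ let $\sigma_r$ be the algebra automorphism with $\sigma_r(x)=x$, $\sigma_r(y)=rx+y$, and let $S_r$ be the $\mathbb{K}[s,t]$-linear map with $S_r(1)=1$ and $S_r(wa)=\sigma_r(w)a$ for every word $w$ and every letter $a\in\{x,y\}$. Then $$\sigma_s\circ\sigma_t=\sigma_{s+t},\qquad S_s\circ S_t=S_{s+t}.$$
   Context: Words are monomials in the noncommuting letters $x,y$; $1$ denotes the empty word. *)

From HB Require Import structures.
From mathcomp Require Import all_boot all_order all_algebra.
From mathcomp Require Import finmap.
From mathcomp.multinomials Require Import monalg mpoly.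

Set Implicit Arguments.
Unset Strict Implicit.
Unset Printing Implicit Defensive.

Import GRing.Theory.
Local Open Scope ring_scope.

Definition Kst (K : fieldType) := {mpoly K[2]}.
Definition var_s (K : fieldType) : Kst K := 'X_(@ord0 1).
Definition var_t (K : fieldType) : Kst K := 'X_(@ord_max 1).

(* Noncommutative polynomial algebra K[s,t]<x,y>: the monoid algebra of the
   free monoid on the two letters, encoded as bool: false = x, true = y.
   Words are elements of {fmonom bool} (a wrapper around seq bool; the
   empty word is 1). *)
Definition NC (K : fieldType) := {malg (Kst K)[{fmonom bool}]}.

Definition letter (K : fieldType) (a : bool) : NC K := << FMonom [:: a] >>.
Definition X (K : fieldType) : NC K := letter K false.
Definition Y (K : fieldType) : NC K := letter K true.

Definition sigma_word (K : fieldType) (r : Kst K) (w : seq bool) : NC K :=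
  \prod_(a <- w) (if a then r *: X K + Y K else X K).

Definition sigma (K : fieldType) (r : Kst K) (f : NC K) : NC K :=
  \sum_(w <- monalg.msupp f) monalg.mcoeff w f *: sigma_word r w.

(* S_r on a word: S_r(1) = 1 and S_r(w a) = sigma_r(w) a. *)
Definition S_word (K : fieldType) (r : Kst K) (w : seq bool) : NC K :=
  match rev w with
  | [::] => 1
  | a :: u => sigma_word r (rev u) * letter K a
  end.

Definition S_map (K : fieldType) (r : Kst K) (f : NC K) : NC K :=
  \sum_(w <- monalg.msupp f) monalg.mcoeff w f *: S_word r w.

From HB Require Import structures.
From mathcomp Require Import all_boot all_order all_algebra.
From mathcomp Require Import finmap.
(* monalg is imported last so that [mcoeff], [msupp] and [%:MP] denote the
   monoid-algebra operations rather than their mpoly homonyms. *)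
From mathcomp.multinomials Require Import mpoly monalg.

(* sigma_r and S_r are the K[s,t]-linear extensions of maps on words, and the
   linear extension of h2 followed by that of h1 is the linear extension of
   (lin_ext h1) o h2, so both identities reduce to words.  Since sigma_r is
   multiplicative on words it is an algebra endomorphism, and on letters
   sigma_s (sigma_t y) = sigma_s (t x + y) = t x + s x + y = sigma_(s+t) y.
   For S, the identity S_r (g a) = sigma_r (g) a, valid for every polynomial g
   and letter a, gives
   S_s (S_t (w a)) = sigma_s (sigma_t w) a = sigma_(s+t) (w) a = S_(s+t) (w a). *)

Set Implicit Arguments.
Unset Strict Implicit.
Unset Printing Implicit Defensive.

Import GRing.Theory.
Local Open Scope ring_scope.

Section LinearExtension.
Variable R : comNzRingType.

Lemma malgC_comm (N : monomType) (c : R) (g : {malg R[N]}) : GRing.comm c%:MP g.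
Proof.
rewrite /GRing.comm mul_malgC malgM_def fgmulgU malgZ_def.
by apply: eq_bigr => k _; rewrite mulm1 mulrC.
Qed.

Definition lin_ext {M N : monomType} (h : M -> {malg R[N]}) : {malg R[M]} -> {malg R[N]} :=
  mmap (@malgC N R) h.

Section Theory.
Variables M N : monomType.
Implicit Types (h : M -> {malg R[N]}) (g : {malg R[M]}).

Lemma lin_extE h g : lin_ext h g = \sum_(k <- msupp g) mcoeff k g *: h k.
Proof. by apply: eq_bigr => k _; rewrite mul_malgC. Qed.

Lemma lin_extU h c k : lin_ext h << c *g k >> = c *: h k.
Proof. by rewrite /lin_ext mmapU mul_malgC. Qed.

Lemma lin_extZ h c g : lin_ext h (c *: g) = c *: lin_ext h g.
Proof.
rewrite /lin_ext (mmapEw (msuppZ_le c g)) mmapE scaler_sumr.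
by apply: eq_bigr => k _; rewrite mcoeffZ /= mpolyCM -mulrA mul_malgC.
Qed.

HB.instance Definition _ h :=
  GRing.Additive.copy (lin_ext h) (mmap (@malgC N R) h).

Lemma eq_lin_ext h1 h2 : h1 =1 h2 -> lin_ext h1 =1 lin_ext h2.
Proof. by move=> eq_h g; apply: eq_bigr => k _; rewrite eq_h. Qed.

Lemma lin_extM (h : {mmorphism M -> {malg R[N]}}) : multiplicative (lin_ext h).
Proof. by apply: commr_mmap_is_multiplicative => c m m'; apply: malgC_comm. Qed.

Lemma lin_extMU h h' m m' g :
  (forall k, h (mmul k m) = h' k * << m' >>) ->
  lin_ext h (g * << m >>) = lin_ext h' g * << m' >>.
Proof.
move=> hM; rewrite malgM_def fgmulgU raddf_sum lin_extE mulr_suml.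
by apply: eq_bigr => k _; rewrite /= mulr1 lin_extU hM scalerAl.
Qed.

End Theory.

Lemma lin_ext_comp (M N P : monomType)
    (h1 : N -> {malg R[P]}) (h2 : M -> {malg R[N]}) (g : {malg R[M]}) :
  lin_ext h1 (lin_ext h2 g) = lin_ext (lin_ext h1 \o h2) g.
Proof.
rewrite [lin_ext h2 g]lin_extE raddf_sum lin_extE.
by apply: eq_bigr => k _; rewrite /= lin_extZ.
Qed.

End LinearExtension.

(* Stated over an abstract module: rewriting with [scalerDl] directly in [NC K]
   sends unification into a very long computation. *)
Lemma scalerDl_translate (R : pzRingType) (V : lmodType R) (s t : R) (x y : V) :
  t *: x + (s *: x + y) = (s + t) *: x + y.
Proof. by rewrite scalerDl addrA (addrC (t *: x)). Qed.

Section FreeAlgebra.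
Variable K : fieldType.
Implicit Types (r s t : Kst K) (f g : NC K) (a : bool) (w : seq bool).

Definition sigma_mon r (w : {fmonom bool}) : NC K := sigma_word r w.

Lemma sigma_word_nil r : sigma_word r [::] = 1.
Proof. exact: big_nil. Qed.

Lemma sigma_word1 r a : sigma_word r [:: a] = if a then r *: X K + Y K else X K.
Proof. exact: big_seq1. Qed.

Lemma sigma_word_cat r w1 w2 :
  sigma_word r (w1 ++ w2) = sigma_word r w1 * sigma_word r w2.
Proof. exact: big_cat. Qed.

Lemma sigma_mon_is_mmorphism r : mmorphism (sigma_mon r).
Proof.
rewrite /mmorphism /sigma_mon; split=> [w1 w2|]; first by rewrite fmM sigma_word_cat.
by rewrite fm1 sigma_word_nil.
Qed.

HB.instance Definition _ r :=
  isMultiplicative.Build _ _ (sigma_mon r) (sigma_mon_is_mmorphism r).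

Lemma sigmaE r : sigma r =1 lin_ext (sigma_mon r).
Proof. by move=> f; rewrite lin_extE. Qed.

Lemma S_mapE r : S_map r =1 lin_ext (fun w : {fmonom bool} => S_word r w).
Proof. by move=> f; rewrite lin_extE. Qed.

Lemma sigmaM r : multiplicative (sigma r).
Proof. by split=> [f g|]; rewrite !sigmaE (lin_extM (sigma_mon r)). Qed.

Lemma sigma_letter r a : sigma r (letter K a) = sigma_word r [:: a].
Proof. by rewrite sigmaE lin_extU scale1r. Qed.

Lemma sigma_X r : sigma r (X K) = X K.
Proof. by rewrite /X sigma_letter sigma_word1. Qed.

Lemma sigma_Y r : sigma r (Y K) = r *: X K + Y K.
Proof. by rewrite /Y sigma_letter sigma_word1. Qed.

Lemma sigma_sigma_word s t w : sigma s (sigma_word t w) = sigma_word (s + t) w.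
Proof.
elim: w => [|a w IHw]; first by rewrite !sigma_word_nil (sigmaM s).2.
rewrite -cat1s !sigma_word_cat (sigmaM s).1 IHw; congr (_ * _).
rewrite !sigma_word1; case: a; last exact: sigma_X.
rewrite sigmaE raddfD /= lin_extZ -!sigmaE sigma_X sigma_Y.
exact: scalerDl_translate.
Qed.

Lemma S_word_nil r : S_word r [::] = 1.
Proof. by []. Qed.

Lemma S_word_rcons r w a : S_word r (rcons w a) = sigma_word r w * letter K a.
Proof. by rewrite /S_word rev_rcons revK. Qed.

Lemma S_map_mul_letter r g a : S_map r (g * letter K a) = sigma r g * letter K a.
Proof.
rewrite S_mapE sigmaE; apply: lin_extMU => w.
by rewrite /= fmM cats1 S_word_rcons.
Qed.

Lemma S_map1 r : S_map r 1 = 1.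
Proof. by rewrite S_mapE -[1 in LHS]mpolyC1E lin_extU scale1r fm1. Qed.

Lemma S_map_S_word s t w : S_map s (S_word t w) = S_word (s + t) w.
Proof.
case/lastP: w => [|w a]; last by rewrite !S_word_rcons S_map_mul_letter sigma_sigma_word.
by rewrite !S_word_nil S_map1.
Qed.

Lemma sigma_comp s t f : sigma s (sigma t f) = sigma (s + t) f.
Proof.
rewrite (sigmaE t) (sigmaE s) lin_ext_comp (sigmaE (s + t)).
by apply: eq_lin_ext => w /=; rewrite -sigmaE sigma_sigma_word.
Qed.

Lemma S_map_comp s t f : S_map s (S_map t f) = S_map (s + t) f.
Proof.
rewrite (S_mapE t) (S_mapE s) lin_ext_comp (S_mapE (s + t)).
by apply: eq_lin_ext => w /=; rewrite -S_mapE S_map_S_word.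
Qed.

End FreeAlgebra.

Theorem lemma2p1 (K : fieldType) (charK0 : [pchar K] =i pred0) :
  (forall f : NC K,
      sigma (var_s K) (sigma (var_t K) f) = sigma (var_s K + var_t K) f) /\
  (forall f : NC K,
      S_map (var_s K) (S_map (var_t K) f) = S_map (var_s K + var_t K) f).
Proof.
by split=> f; [apply: sigma_comp | apply: S_map_comp].
Qed.
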